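(* Let $0<\varepsilon\le1/4$, $\beta>1$, and define $\psi_{\varepsilon,\beta}:[0,1]\to[0,1]$ by $\psi_{\varepsilon,\beta}(x)=x$ for $x\in[0,\varepsilon]$, $\psi_{\varepsilon,\beta}(x)=\varepsilon+(1-2\varepsilon)^{1-\beta}(x-\varepsilon)^\beta$ for $x\in[\varepsilon,1-\varepsilon]$, and $\psi_{\varepsilon,\beta}(x)=x$ for $x\in[1-\varepsilon,1]$. For $n\ge1$ let $$d_n=\int_0^1\int_0^{\psi_{\varepsilon,\beta}(x_1)}\int_0^{\psi_{\varepsilon,\beta}(x_2)}\cdots\int_0^{\psi_{\varepsilon,\beta}(x_{n-1})}dx_n\cdots dx_1 .$$ Then (1) for $n=1,2,\dots$, $$d_n=\frac{(2\varepsilon)^n}{n!}+\frac{(1-2\varepsilon)(2\varepsilon)^{n-1}}{(n-1)!}+\sum_{l=2}^n\frac{(1-2\varepsilon)^l(2\varepsilon)^{n-l}}{(n-l)!\,(1+\beta)(1+\beta+\beta^2)\cdots(1+\beta+\dots+\beta^{l-1})};$$ (2) there is a constant $C(\varepsilon,\beta)$ not depending on $n$ such that $d_n<C(\varepsilon,\beta)\frac{(4\varepsilon)^n}{n!}$ for $n=1,2,\dots$. *)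

From Stdlib Require Import Reals Factorial.
From Coquelicot Require Import Coquelicot.
Open Scope R_scope.

(* psi_{eps,beta} on [0,1] (outside [0,1] the value is irrelevant). *)
Definition psi (eps beta x : R) : R :=
  if Rle_dec x eps then x
  else if Rle_dec x (1 - eps) then eps + Rpower (1 - 2*eps) (1 - beta) * Rpower (x - eps) beta
  else x.

(* Nested integrals, innermost first:
   G 0 x = 1,  G (k+1) x = int_0^{psi x} G k y dy.
   Then d_n = int_0^1 G (n-1) x dx, i.e.
   d_n = int_0^1 int_0^{psi x_1} ... int_0^{psi x_{n-1}} dx_n ... dx_1. *)
Fixpoint G (eps beta : R) (k : nat) (x : R) : R :=
  match k with
  | O => 1
  | S k' => RInt (fun y => G eps beta k' y) 0 (psi eps beta x)
  end.

Definition d (eps beta : R) (n : nat) : R := RInt (fun x => G eps beta (n - 1) x) 0 1.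

Definition geomsum (beta : R) (j : nat) : R := sum_f_R0 (fun i => beta ^ i) j.

Fixpoint prodgeom (beta : R) (m : nat) : R :=
  match m with
  | O => 1
  | S m' => prodgeom beta m' * geomsum beta m
  end.

(* closed form of part (1); sum_n_m over l = 2..n is empty (= 0) when n < 2 *)
Definition dformula (eps beta : R) (n : nat) : R :=
  (2*eps)^n / INR (Factorial.fact n)
  + (1 - 2*eps) * (2*eps)^(n-1) / INR (Factorial.fact (n-1))
  + sum_n_m (fun l => (1 - 2*eps)^l * (2*eps)^(n-l)
                       / (INR (Factorial.fact (n-l)) * prodgeom beta (l-1))) 2 n.

From Stdlib Require Import Reals Factorial Lra Lia.
From Coquelicot Require Import Coquelicot.
Open Scope R_scope.

(* Write G_k for the k-fold inner integral, so that G_(k+1)(x) = int_0^psi(x) G_k.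
   On [0, eps], G_k(x) = x^k/k!.  On the middle piece the substitution
   u = (x - eps)/(1 - 2 eps) turns psi into eps + (1 - 2 eps) u^beta, so G_k is a
   combination of the powers u^(beta + ... + beta^l), l <= k; one more integration
   turns beta + ... + beta^l into beta + ... + beta^(l+1) and produces the factor
   1/(1 + beta + ... + beta^l).  On [1 - eps, 1], psi is the identity and G_k is a
   polynomial in x - (1 - 2 eps); its value at x = 1 is the formula (1).
   For (2), the l-th term of (1) is (2 eps)^n/n! * C(n, l) * w_l, where the ratio
   w_(l+1)/w_l = (l + 1) r/(1 + ... + beta^l), r = (1 - 2 eps)/(2 eps), tends to 0
   because the denominator grows quadratically in l; hence w_l is bounded, and
   sum_l C(n, l) = 2^n turns (2 eps)^n into (4 eps)^n. *)

(* In Stdlib [Rpower 0 p = 1], hence the explicit value [0] for [u <= 0]. *)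
Definition powpos (p u : R) : R := if Rle_dec u 0 then 0 else Rpower u p.

Lemma Rpower_pos u p : 0 < Rpower u p.
Proof. apply exp_pos. Qed.

Lemma Rpower_1_l p : Rpower 1 p = 1.
Proof. unfold Rpower; rewrite ln_1, Rmult_0_r; apply exp_0. Qed.

Lemma Rpower_le_1 u p : 0 <= p -> 0 < u <= 1 -> Rpower u p <= 1.
Proof.
  intros Hp Hu; rewrite <- (Rpower_1_l p); apply Rle_Rpower_l; lra.
Qed.

Lemma powpos_nonpos p u : u <= 0 -> powpos p u = 0.
Proof. unfold powpos; destruct (Rle_dec u 0); lra. Qed.

Lemma powpos_pos p u : 0 < u -> powpos p u = Rpower u p.
Proof. unfold powpos; destruct (Rle_dec u 0); lra. Qed.

Lemma continuous_of_is_derive (f : R -> R) x l : is_derive f x l -> continuous f x.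
Proof.
  intros H; apply continuity_pt_filterlim, derivable_continuous_pt.
  exists l; apply is_derive_Reals, H.
Qed.

Lemma powpos_continuous p u : 0 < p -> continuous (powpos p) u.
Proof.
  intros Hp; destruct (Rtotal_order u 0) as [Hu|[->|Hu]].
  - apply continuous_ext_loc with (fun _ => 0); [|apply continuous_const].
    apply (filter_imp (fun y => y < 0)); [|exact (open_lt 0 u Hu)].
    intros y Hy; rewrite powpos_nonpos; lra.
  - apply continuity_pt_filterlim; intros e He.
    (* [h^p < e] as soon as [0 < h < e^(1/p)] *)
    exists (Rpower e (/p)); split; [apply Rpower_pos|].
    intros h [_ Hh]; change (Rabs (powpos p h - powpos p 0) < e).
    simpl in Hh; unfold R_dist in Hh; rewrite Rminus_0_r in Hh.
    rewrite (powpos_nonpos p 0), Rminus_0_r by lra.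
    destruct (Rle_dec h 0) as [Hh0|Hh0]; [rewrite powpos_nonpos, Rabs_R0; lra|].
    rewrite powpos_pos, Rabs_pos_eq by (try left; try apply Rpower_pos; lra).
    rewrite Rabs_pos_eq in Hh by lra.
    apply Rlt_le_trans with (Rpower (Rpower e (/p)) p).
    + apply Rlt_Rpower_l; lra.
    + rewrite Rpower_mult, Rinv_l, Rpower_1; lra.
  - apply continuous_ext_loc with (fun y => Rpower y p).
    + apply (filter_imp (fun y => 0 < y)); [|exact (open_gt 0 u Hu)].
      intros y Hy; rewrite powpos_pos; lra.
    + apply (continuous_of_is_derive _ _ (p * Rpower u (p - 1))), is_derive_Reals.
      apply derivable_pt_lim_power, Hu.
Qed.

Lemma powpos_mul_pred q u : 1 < q -> powpos q u = u * powpos (q - 1) u.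
Proof.
  intros Hq; destruct (Rle_dec u 0).
  - rewrite !powpos_nonpos by lra; ring.
  - rewrite !powpos_pos by lra.
    rewrite <- (Rpower_1 u) at 2 by lra; rewrite <- Rpower_plus; f_equal; ring.
Qed.

Lemma is_derive_powpos q u : 1 < q -> is_derive (powpos q) u (q * powpos (q - 1) u).
Proof.
  intros Hq; destruct (Rtotal_order u 0) as [Hu|[->|Hu]].
  - rewrite powpos_nonpos, Rmult_0_r by lra.
    apply is_derive_ext_loc with (fun _ => 0);
      [|apply (is_derive_const (V := R_NormedModule))].
    apply (filter_imp (fun y => y < 0)); [|exact (open_lt 0 u Hu)].
    intros y Hy; rewrite powpos_nonpos; lra.
  - (* the difference quotient at 0 is [powpos (q - 1) h], which tends to 0 *)
    rewrite powpos_nonpos, Rmult_0_r by lra.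
    apply is_derive_Reals; intros e He.
    destruct (proj2 (continuity_pt_filterlim _ _)
                (powpos_continuous (q - 1) 0 ltac:(lra)) e He) as [d [Hd Hcont]].
    exists (mkposreal d Hd); intros h Hh0 Hh.
    rewrite Rplus_0_l, (powpos_nonpos _ 0), !Rminus_0_r, powpos_mul_pred by lra.
    replace (h * powpos (q - 1) h / h) with (powpos (q - 1) h) by (field; lra).
    specialize (Hcont h); simpl in Hcont; unfold R_dist in Hcont.
    rewrite (powpos_nonpos (q - 1) 0), !Rminus_0_r in Hcont by lra.
    apply Hcont; split; [split; [exact I|auto]|exact Hh].
  - apply is_derive_ext_loc with (fun y => Rpower y q).
    + apply (filter_imp (fun y => 0 < y)); [|exact (open_gt 0 u Hu)].
      intros y Hy; rewrite powpos_pos; lra.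
    + rewrite powpos_pos by lra; apply is_derive_Reals, derivable_pt_lim_power, Hu.
Qed.

Lemma is_RInt_antiderivative (F f : R -> R) a b :
  (forall x, Rmin a b <= x <= Rmax a b -> is_derive F x (f x)) ->
  (forall x, Rmin a b <= x <= Rmax a b -> continuous f x) ->
  is_RInt f a b (F b - F a).
Proof. exact (@is_RInt_derive R_CompleteNormedModule F f a b). Qed.

Lemma is_RInt_powpos q w : 1 <= q -> 0 <= w ->
  is_RInt (powpos (q - 1)) 0 w (powpos q w / q).
Proof.
  intros Hq Hw; destruct (Req_dec q 1) as [->|Hq1].
  - (* [powpos 0] is [1] except at the left end point *)
    apply is_RInt_ext with (fun _ => 1).
    + intros y Hy; rewrite Rmin_left, Rmax_right in Hy by lra.
      rewrite powpos_pos, Rminus_diag, Rpower_O; lra.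
    + replace (powpos 1 w / 1) with (scal (w - 0) 1).
      * apply (@is_RInt_const R_NormedModule).
      * unfold scal; simpl; unfold mult; simpl.
        destruct (Req_dec w 0) as [->|Hw0];
          [rewrite powpos_nonpos|rewrite powpos_pos, Rpower_1]; lra.
  - replace (powpos q w / q) with (powpos q w / q - powpos q 0 / q)
      by (rewrite (powpos_nonpos q 0) by lra; field; lra).
    apply (is_RInt_antiderivative (fun u => powpos q u / q)); intros u _.
    + replace (powpos (q - 1) u) with (/ q * (q * powpos (q - 1) u)) by (field; lra).
      apply is_derive_ext with (fun u => / q * powpos q u); [intros t; simpl; field; lra|].
      apply is_derive_scal, is_derive_powpos; lra.
    + apply powpos_continuous; lra.
Qed.

Lemma is_RInt_powpos_affine q a c w : 1 <= q -> 0 < a -> 0 <= w ->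
  is_RInt (fun y => powpos (q - 1) ((y - c) / a)) c (c + a * w) (a * (powpos q w / q)).
Proof.
  intros Hq Ha Hw.
  assert (H := is_RInt_powpos q w Hq Hw).
  replace 0 with (/ a * c + - c / a) in H by (field; lra).
  replace w with (/ a * (c + a * w) + - c / a) in H at 1 by (field; lra).
  apply (@is_RInt_comp_lin R_NormedModule) in H.
  apply (@is_RInt_scal R_NormedModule _ _ _ a) in H.
  revert H; apply is_RInt_ext; intros y _.
  unfold scal; simpl; unfold mult; simpl.
  replace (/ a * y + - c / a) with ((y - c) / a) by (field; lra).
  field; lra.
Qed.

Lemma is_RInt_sum_n (f : nat -> R -> R) (I : nat -> R) a b n :
  (forall l, (l <= n)%nat -> is_RInt (f l) a b (I l)) ->
  is_RInt (fun y => sum_n (fun l => f l y) n) a b (sum_n I n).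
Proof.
  induction n as [|n IH]; intros H.
  - apply is_RInt_ext with (f 0%nat); [intros; rewrite sum_O; reflexivity|].
    rewrite sum_O; apply H; lia.
  - apply is_RInt_ext with (fun y => plus (sum_n (fun l => f l y) n) (f (S n) y));
      [intros; rewrite sum_Sn; reflexivity|].
    rewrite sum_Sn; apply (is_RInt_plus (V := R_NormedModule)).
    + apply IH; intros; apply H; lia.
    + apply H; lia.
Qed.

Lemma is_RInt_pow_fact c m x0 x1 :
  is_RInt (fun y => (y - c) ^ m / INR (fact m)) x0 x1
    ((x1 - c) ^ S m / INR (fact (S m)) - (x0 - c) ^ S m / INR (fact (S m))).
Proof.
  assert (Hf : forall k, 0 < INR (fact k)) by (intro; apply lt_0_INR, lt_O_fact).
  apply (is_RInt_antiderivative (fun y => (y - c) ^ S m / INR (fact (S m)))); intros y _.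
  - auto_derive; auto.
    change (match m with 0%nat => 1 | S _ => INR m + 1 end) with (INR (S m)).
    change (fact m + m * fact m)%nat with (fact (S m)).
    rewrite fact_simpl, mult_INR; replace (y + - c) with (y - c) by ring.
    field; split; apply not_0_INR; [apply fact_neq_0|lia].
  - apply (continuous_of_is_derive _ _ (INR m * (y - c) ^ pred m / INR (fact m))).
    auto_derive; auto; rewrite Rmult_1_l; reflexivity.
Qed.

Lemma geomsum_S b l : geomsum b (S l) = 1 + b * geomsum b l.
Proof.
  unfold geomsum; induction l as [|l IH]; [simpl; ring|].
  rewrite tech5 in IH; rewrite !tech5.
  change (b ^ S (S l)) with (b * b ^ S l); lra.
Qed.

Lemma geomsum_ge1 b l : 0 <= b -> 1 <= geomsum b l.
Proof.
  intros Hb; induction l as [|l IH]; [unfold geomsum; simpl; lra|].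
  rewrite geomsum_S; nra.
Qed.

Lemma geomsum_lower_bound b l : 1 <= b ->
  INR (S l) * (1 + (b - 1) * INR l / 2) <= geomsum b l.
Proof.
  intros Hb; induction l as [|l IH]; [unfold geomsum; simpl; lra|].
  unfold geomsum in *; rewrite tech5.
  assert (Hbern := Rle_pow_lin (b - 1) (S l) ltac:(lra)).
  replace (1 + (b - 1)) with b in Hbern by ring.
  rewrite !S_INR in *; nra.
Qed.

Lemma prodgeom_pos b l : 0 <= b -> 0 < prodgeom b l.
Proof.
  intros Hb; induction l as [|l IH]; simpl; [lra|].
  generalize (geomsum_ge1 b (S l) Hb); nra.
Qed.

Lemma prodgeom_pred b l : prodgeom b l = prodgeom b (l - 1) * geomsum b l.
Proof.
  destruct l as [|l]; [unfold geomsum; simpl; ring|].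
  simpl; rewrite Nat.sub_0_r; reflexivity.
Qed.

Lemma psi_middle eps beta x : 0 < eps -> eps < x -> x <= 1 - eps ->
  psi eps beta x = eps + (1 - 2*eps) * Rpower ((x - eps) / (1 - 2*eps)) beta.
Proof.
  intros He Hx1 Hx2; unfold psi.
  destruct (Rle_dec x eps); [lra|]; destruct (Rle_dec x (1 - eps)); [|lra].
  replace (x - eps) with ((1 - 2*eps) * ((x - eps) / (1 - 2*eps))) at 1 by (field; lra).
  rewrite <- Rpower_mult_distr, <- Rmult_assoc, <- Rpower_plus by
    (try apply Rdiv_lt_0_compat; lra).
  replace (1 - beta + beta) with 1 by ring; rewrite Rpower_1; lra.
Qed.

Lemma middle_coord_bounds eps x : 0 < eps < 1/2 -> eps < x <= 1 - eps ->
  0 < (x - eps) / (1 - 2*eps) <= 1.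
Proof.
  intros He Hx; split; [apply Rdiv_lt_0_compat; lra|].
  apply Rmult_le_reg_r with (1 - 2*eps); [lra|]; field_simplify; lra.
Qed.

Lemma psi_range eps beta x : 0 < eps < 1/2 -> 0 < beta -> 0 <= x <= 1 ->
  0 <= psi eps beta x <= 1.
Proof.
  intros He Hb Hx; destruct (Rle_dec x eps) as [Hxe|Hxe];
    [unfold psi; destruct (Rle_dec x eps); lra|].
  destruct (Rle_dec x (1 - eps)) as [Hx1|Hx1];
    [|unfold psi; destruct (Rle_dec x eps), (Rle_dec x (1 - eps)); lra].
  rewrite psi_middle by lra.
  assert (Hu := middle_coord_bounds eps x He ltac:(lra)).
  assert (0 < Rpower ((x - eps) / (1 - 2*eps)) beta <= 1)
    by (split; [apply Rpower_pos|apply Rpower_le_1; lra]).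
  nra.
Qed.

Lemma bounded_of_eventually_nonincreasing (u : nat -> R) L :
  (forall l, 0 <= u l) -> (forall l, (L <= l)%nat -> u (S l) <= u l) ->
  forall l, u l <= sum_f_R0 u L.
Proof.
  intros Hpos Hdec.
  assert (Hterm : forall i, (i <= L)%nat -> u i <= sum_f_R0 u L).
  { clear Hdec; intros i Hi; induction L as [|L IH].
    - replace i with 0%nat by lia; simpl; lra.
    - simpl; destruct (Nat.eq_dec i (S L)) as [->|Hne].
      + generalize (cond_pos_sum u L Hpos); lra.
      + generalize (Hpos (S L)) (IH ltac:(lia)); lra. }
  intros l; destruct (Nat.le_gt_cases l L) as [Hl|Hl]; [auto|].
  apply Rle_trans with (u L); [|apply Hterm; lia].
  replace l with (L + (l - L))%nat by lia; induction (l - L)%nat as [|j IH].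
  - rewrite Nat.add_0_r; lra.
  - rewrite Nat.add_succ_r; apply Rle_trans with (u (L + j)%nat); [apply Hdec; lia|exact IH].
Qed.

Lemma sum_n_shift (f : nat -> R) n : sum_n f (S n) = f 0%nat + sum_n (fun l => f (S l)) n.
Proof. rewrite !sum_n_Reals; apply decomp_sum; lia. Qed.

Lemma sum_binomial_coef n : sum_f_R0 (fun l => Binomial.C n l) n = 2 ^ n.
Proof.
  replace 2 with (1 + 1) by ring; rewrite binomial.
  apply sum_eq; intros i _; rewrite !pow1; ring.
Qed.

Section NestedIntegrals.

Variables eps beta : R.
Hypothesis eps_pos : 0 < eps.
Hypothesis eps_le : eps <= 1/4.
Hypothesis beta_gt1 : 1 < beta.

(* [coef n (2*eps) l] is the l-th term of the formula (1) for d_n. *)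
Definition coef (k : nat) (s : R) (l : nat) : R :=
  (1 - 2*eps) ^ l * s ^ (k - l) / (INR (fact (k - l)) * prodgeom beta (l - 1)).

Definition upper_form (k : nat) (s : R) : R := sum_n (coef k s) k.

Definition middle_form (k : nat) (x : R) : R :=
  sum_n (fun l => coef k eps l * powpos (geomsum beta l - 1) ((x - eps) / (1 - 2*eps))) k.

Definition Gclosed (k : nat) (x : R) : R :=
  if Rle_dec x eps then x ^ k / INR (fact k)
  else if Rle_dec x (1 - eps) then middle_form k x
  else upper_form k (x - (1 - 2*eps)).

Lemma coef_succ k s l : coef (S k) s (S l) = coef k s l * (1 - 2*eps) / geomsum beta l.
Proof.
  unfold coef; replace (S k - S l)%nat with (k - l)%nat by lia.
  replace (S l - 1)%nat with l by lia; rewrite (prodgeom_pred beta l).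
  generalize (geomsum_ge1 beta l) (prodgeom_pos beta (l - 1)) (fact_neq_0 (k - l)).
  intros; simpl pow; field; repeat split; try apply not_0_INR; auto; lra.
Qed.

Lemma coef_diag k s s' : coef k s k = coef k s' k.
Proof. unfold coef; rewrite Nat.sub_diag; reflexivity. Qed.

Lemma middle_form_right_end k : middle_form k (1 - eps) = upper_form k eps.
Proof.
  unfold middle_form, upper_form; apply sum_n_ext; intros l.
  replace ((1 - eps - eps) / (1 - 2*eps)) with 1 by (field; lra).
  rewrite powpos_pos, Rpower_1_l by lra; apply Rmult_1_r.
Qed.

Lemma is_RInt_Gclosed_lower k x : 0 <= x <= eps ->
  is_RInt (Gclosed k) 0 x (x ^ S k / INR (fact (S k))).
Proof.
  intros Hx; apply is_RInt_ext with (fun y => (y - 0) ^ k / INR (fact k)).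
  - intros y Hy; rewrite Rmin_left, Rmax_right in Hy by lra.
    unfold Gclosed; destruct (Rle_dec y eps); [|lra]; rewrite Rminus_0_r; reflexivity.
  - replace (x ^ S k / INR (fact (S k)))
      with ((x - 0) ^ S k / INR (fact (S k)) - (0 - 0) ^ S k / INR (fact (S k)))
      by (rewrite !Rminus_0_r, pow_i by lia; unfold Rdiv; ring).
    apply is_RInt_pow_fact.
Qed.

Lemma middle_form_succ k x : eps < x ->
  middle_form (S k) x = eps ^ S k / INR (fact (S k))
    + sum_n (fun l => coef k eps l * ((1 - 2*eps) *
         (powpos (geomsum beta l) (Rpower ((x - eps) / (1 - 2*eps)) beta) / geomsum beta l))) k.
Proof.
  intros Hx; set (u := (x - eps) / (1 - 2*eps)).
  assert (Hu : 0 < u) by (apply Rdiv_lt_0_compat; lra).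
  unfold middle_form; rewrite sum_n_shift; fold u; f_equal.
  - unfold coef; rewrite Nat.sub_0_r, pow_O; simpl (prodgeom beta (0 - 1)).
    replace (geomsum beta 0 - 1) with 0 by (unfold geomsum; simpl; ring).
    rewrite powpos_pos, Rpower_O by lra; field; apply not_0_INR, fact_neq_0.
  - rewrite !sum_n_Reals; apply sum_eq; intros l _.
    rewrite coef_succ, geomsum_S, !powpos_pos, Rpower_mult by (try apply Rpower_pos; lra).
    replace (1 + beta * geomsum beta l - 1) with (beta * geomsum beta l) by ring.
    generalize (geomsum_ge1 beta l); intros; field; lra.
Qed.

Lemma is_RInt_Gclosed_middle k x : eps < x <= 1 - eps ->
  is_RInt (Gclosed k) 0 (psi eps beta x) (middle_form (S k) x).
Proof.
  intros Hx; rewrite psi_middle, middle_form_succ by lra.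
  set (a := 1 - 2*eps); set (w := Rpower ((x - eps) / a) beta).
  assert (Hw : 0 < w <= 1).
  { split; [apply Rpower_pos|apply Rpower_le_1, middle_coord_bounds; lra]. }
  apply (@is_RInt_Chasles R_NormedModule) with eps; [apply is_RInt_Gclosed_lower; lra|].
  apply is_RInt_ext
    with (fun y => sum_n (fun l => coef k eps l * powpos (geomsum beta l - 1) ((y - eps) / a)) k).
  { intros y Hy; rewrite Rmin_left, Rmax_right in Hy by (unfold a in *; nra).
    unfold Gclosed; destruct (Rle_dec y eps); [lra|].
    destruct (Rle_dec y (1 - eps)); [reflexivity|unfold a in *; nra]. }
  apply (is_RInt_sum_n (fun l y => coef k eps l * powpos (geomsum beta l - 1) ((y - eps) / a))).
  intros l _; apply (@is_RInt_scal R_NormedModule _ _ _ (coef k eps l)).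
  apply is_RInt_powpos_affine; [apply geomsum_ge1|unfold a|]; lra.
Qed.

Lemma is_RInt_coef k l c x0 x1 : (l <= k)%nat ->
  is_RInt (fun y => coef k (y - c) l) x0 x1 (coef (S k) (x1 - c) l - coef (S k) (x0 - c) l).
Proof.
  intros Hl; set (A := (1 - 2*eps) ^ l / prodgeom beta (l - 1)).
  assert (Hcoef : forall k' s, coef k' s l = A * (s ^ (k' - l) / INR (fact (k' - l)))).
  { intros k' s; unfold coef, A.
    generalize (prodgeom_pos beta (l - 1)) (fact_neq_0 (k' - l)); intros.
    field; split; try apply not_0_INR; auto; lra. }
  rewrite !Hcoef, <- Rmult_minus_distr_l; replace (S k - l)%nat with (S (k - l)) by lia.
  apply is_RInt_ext with (fun y => scal A ((y - c) ^ (k - l) / INR (fact (k - l)))).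
  - intros y _; rewrite Hcoef; reflexivity.
  - apply (@is_RInt_scal R_NormedModule), is_RInt_pow_fact.
Qed.

Lemma is_RInt_Gclosed_upper k x : 1 - eps < x ->
  is_RInt (Gclosed k) 0 x (upper_form (S k) (x - (1 - 2*eps))).
Proof.
  intros Hx; set (c := 1 - 2*eps).
  assert (Hpsi : psi eps beta (1 - eps) = 1 - eps).
  { rewrite psi_middle by lra; replace ((1 - eps - eps) / (1 - 2*eps)) with 1 by (field; lra).
    rewrite Rpower_1_l; ring. }
  replace (upper_form (S k) (x - c))
    with (plus (upper_form (S k) eps)
            (sum_n (fun l => coef (S k) (x - c) l - coef (S k) (1 - eps - c) l) k)).
  2:{ replace (1 - eps - c) with eps by (unfold c; ring).
      unfold upper_form; rewrite !sum_Sn, (coef_diag (S k) eps (x - c)).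
      rewrite !sum_n_Reals, minus_sum; unfold plus; simpl; ring. }
  apply (@is_RInt_Chasles R_NormedModule) with (1 - eps).
  { rewrite <- middle_form_right_end, <- Hpsi at 1; apply is_RInt_Gclosed_middle; lra. }
  apply is_RInt_ext with (fun y => sum_n (fun l => coef k (y - c) l) k).
  { intros y Hy; rewrite Rmin_left, Rmax_right in Hy by lra.
    unfold Gclosed; destruct (Rle_dec y eps); [lra|].
    destruct (Rle_dec y (1 - eps)); [lra|reflexivity]. }
  apply (is_RInt_sum_n (fun l y => coef k (y - c) l)); intros l Hl.
  apply is_RInt_coef, Hl.
Qed.

Lemma G_Gclosed k x : 0 <= x <= 1 -> G eps beta k x = Gclosed k x.
Proof.
  revert x; induction k as [|k IH]; intros x Hx.
  - unfold Gclosed; destruct (Rle_dec x eps); [simpl; field|].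
    unfold middle_form, upper_form, coef; rewrite !sum_O.
    replace (geomsum beta 0 - 1) with 0 by (unfold geomsum; simpl; ring).
    destruct (Rle_dec x (1 - eps)); simpl;
      [rewrite powpos_pos, Rpower_O by (apply Rdiv_lt_0_compat; lra)|]; field.
  - assert (Hpsi := psi_range eps beta x ltac:(lra) ltac:(lra) Hx).
    simpl; rewrite (RInt_ext (G eps beta k) (Gclosed k)).
    2:{ intros y Hy; rewrite Rmin_left, Rmax_right in Hy by lra; apply IH; lra. }
    apply is_RInt_unique; unfold Gclosed at 2.
    destruct (Rle_dec x eps); [|destruct (Rle_dec x (1 - eps))].
    + unfold psi; destruct (Rle_dec x eps); [apply is_RInt_Gclosed_lower|]; lra.
    + apply is_RInt_Gclosed_middle; lra.
    + unfold psi; destruct (Rle_dec x eps), (Rle_dec x (1 - eps)); try lra.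
      apply is_RInt_Gclosed_upper; lra.
Qed.

Lemma d_upper_form n : (1 <= n)%nat -> d eps beta n = upper_form n (2*eps).
Proof.
  intros Hn; unfold d; rewrite (RInt_ext _ (Gclosed (n - 1))).
  2:{ intros y Hy; rewrite Rmin_left, Rmax_right in Hy by lra; apply G_Gclosed; lra. }
  apply is_RInt_unique; replace n with (S (n - 1)) at 2 by lia.
  replace (2*eps) with (1 - (1 - 2*eps)) by ring; apply is_RInt_Gclosed_upper; lra.
Qed.

Lemma upper_form_dformula n : (1 <= n)%nat -> upper_form n (2*eps) = dformula eps beta n.
Proof.
  intros Hn; unfold upper_form, dformula, sum_n.
  rewrite (sum_Sn_m _ 0), (sum_Sn_m _ 1) by lia; unfold plus, coef; simpl.
  rewrite Nat.sub_0_r; field; split; apply not_0_INR, fact_neq_0.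
Qed.

Definition coef_weight (l : nat) : R :=
  INR (fact l) * ((1 - 2*eps) / (2*eps)) ^ l / prodgeom beta (l - 1).

Lemma coef_binomial n l : (l <= n)%nat ->
  coef n (2*eps) l = (2*eps) ^ n / INR (fact n) * Binomial.C n l * coef_weight l.
Proof.
  intros Hl; unfold coef, coef_weight, Binomial.C.
  replace ((2*eps) ^ n) with ((2*eps) ^ l * (2*eps) ^ (n - l))
    by (rewrite <- pow_add; f_equal; lia).
  replace (((1 - 2*eps) / (2*eps)) ^ l) with ((1 - 2*eps) ^ l / (2*eps) ^ l)
    by (unfold Rdiv; rewrite (Rpow_mult_distr (1 - 2*eps)), pow_inv; reflexivity).
  generalize (prodgeom_pos beta (l - 1)) (fact_neq_0 n) (fact_neq_0 l) (fact_neq_0 (n - l))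
    (pow_nonzero (2*eps) l ltac:(lra)); intros.
  field; repeat split; try apply not_0_INR; auto; lra.
Qed.

Lemma coef_weight_S l :
  coef_weight (S l) = coef_weight l * (INR (S l) * ((1 - 2*eps) / (2*eps)) / geomsum beta l).
Proof.
  unfold coef_weight; replace (S l - 1)%nat with l by lia.
  rewrite (prodgeom_pred beta l), fact_simpl, mult_INR; simpl pow.
  generalize (prodgeom_pos beta (l - 1)) (geomsum_ge1 beta l); intros.
  field; lra.
Qed.

Lemma coef_weight_bounded : exists B, forall l, 0 <= coef_weight l <= B.
Proof.
  set (r := (1 - 2*eps) / (2*eps)).
  assert (Hr : 0 < r) by (apply Rdiv_lt_0_compat; lra).
  assert (Hpos : forall l, 0 <= coef_weight l).
  { intros l; unfold coef_weight; apply Rmult_le_pos;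
      [apply Rmult_le_pos; [apply pos_INR|apply pow_le; fold r; lra]|].
    apply Rlt_le, Rinv_0_lt_compat, prodgeom_pos; lra. }
  (* the ratio of consecutive weights is (l + 1) r / geomsum l, at most 1 once
     (beta - 1) l / 2 >= r *)
  destruct (nfloor_ex (2 * r / (beta - 1))) as [L [_ HL]];
    [apply Rlt_le, Rdiv_lt_0_compat; lra|].
  exists (sum_f_R0 coef_weight (S L)); intros l; split; [apply Hpos|].
  apply bounded_of_eventually_nonincreasing; [exact Hpos|]; intros j Hj.
  rewrite coef_weight_S; fold r.
  assert (Hj' : 2 * r / (beta - 1) <= INR j) by (rewrite <- S_INR in HL; apply le_INR in Hj; lra).
  assert (Hratio : INR (S j) * r <= geomsum beta j).
  { apply Rle_trans with (2 := geomsum_lower_bound beta j ltac:(lra)).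
    apply Rmult_le_compat_l; [apply pos_INR|].
    apply Rmult_le_reg_r with (beta - 1); [lra|]; unfold Rdiv in Hj'.
    apply (Rmult_le_compat_r (beta - 1)) in Hj'; [|lra].
    rewrite Rmult_assoc, Rinv_l, Rmult_1_r in Hj' by lra; nra. }
  generalize (Hpos j) (geomsum_ge1 beta j ltac:(lra)); intros.
  assert (INR (S j) * r / geomsum beta j <= 1)
    by (apply Rmult_le_reg_r with (geomsum beta j); [lra|]; field_simplify; lra).
  nra.
Qed.

Lemma d_bound : exists C, forall n, (1 <= n)%nat ->
  d eps beta n < C * (4*eps) ^ n / INR (fact n).
Proof.
  destruct coef_weight_bounded as [B HB]; exists (B + 1); intros n Hn.
  set (t := (2*eps) ^ n / INR (fact n)).
  assert (Ht : 0 < t) by (apply Rdiv_lt_0_compat; [apply pow_lt; lra|apply lt_0_INR, lt_O_fact]).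
  assert (Hd : d eps beta n <= t * B * 2 ^ n).
  { rewrite d_upper_form, <- sum_binomial_coef, scal_sum by exact Hn.
    unfold upper_form; rewrite sum_n_Reals; apply sum_Rle; intros l Hl.
    rewrite coef_binomial by exact Hl; fold t.
    assert (HC : 0 <= Binomial.C n l).
    { unfold Binomial.C; apply Rmult_le_pos; [apply pos_INR|].
      apply Rlt_le, Rinv_0_lt_compat, Rmult_lt_0_compat; apply lt_0_INR, lt_O_fact. }
    generalize (HB l) (Rmult_le_pos t _ (Rlt_le _ _ Ht) HC); nra. }
  replace ((B + 1) * (4*eps) ^ n / INR (fact n)) with (t * B * 2 ^ n + t * 2 ^ n)
    by (unfold t; replace (4*eps) with (2*eps*2) by ring; rewrite (Rpow_mult_distr (2*eps) 2);
        field; apply not_0_INR, fact_neq_0).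
  generalize (pow_lt 2 n ltac:(lra)); nra.
Qed.

End NestedIntegrals.

Theorem lemma4p5 (eps beta : R) (Heps0 : 0 < eps) (Heps1 : eps <= 1/4) (Hbeta : 1 < beta) :
  (forall n : nat, (1 <= n)%nat -> d eps beta n = dformula eps beta n) /\
  (exists C : R, forall n : nat, (1 <= n)%nat ->
      d eps beta n < C * (4*eps)^n / INR (Factorial.fact n)).
Proof.
  split.
  - intros n Hn; rewrite d_upper_form, upper_form_dformula by assumption; reflexivity.
  - exact (d_bound eps beta Heps0 Heps1 Hbeta).
Qed.
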